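(* Let $(x_n)_{n\ge1}$ be a sequence of real numbers, $L\in\mathbb{R}$ and $\sigma\in\,]0,1]$. Then $i(x_n;L)\ge\sigma$ if and only if there exists a subsequence $(x_{k(n)})_{n\ge1}$ (with $k:\mathbb N\to\mathbb N$ strictly increasing) converging to $L$ such that \[ \delta_-\big(\{k(n)\mid n\in\mathbb N\}\big)\ge\sigma . \]
   Context: Let $\mathbb N=\{1,2,\dots\}$. For $K\subseteq\mathbb N$ the lower and upper densities are $\delta_-(K)=\liminf_{n\to\infty}\frac{|K\cap\{1,\dots,n\}|}{n}$ and $\delta_+(K)=\limsup_{n\to\infty}\frac{|K\cap\{1,\dots,n\}|}{n}$; when they coincide, their common value is the density $\delta(K)$. For a real sequence $(x_n)_{n\ge1}$ and $L\in\mathbb R$, the index of convergence of $(x_n)$ to $L$ is \[ i(x_n;L)=1-\sup_{\varepsilon>0}\delta_+\big(\{n\in\mathbb N\mid |x_n-L|\ge\varepsilon\}\big)=\inf_{\varepsilon>0}\delta_-\big(\{n\in\mathbb N\mid |x_n-L|<\varepsilon\}\big). \] *)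

From Stdlib Require Import Reals Lra Lia Classical ClassicalEpsilon.
Open Scope R_scope.

(* Supremum of a set of reals: the least upper bound when it exists,
   0 otherwise (only used on nonempty bounded sets of densities in [0,1]). *)
Definition Rsup (E : R -> Prop) : R :=
  match excluded_middle_informative (exists l, is_lub E l) with
  | left H => proj1_sig (constructive_indefinite_description _ H)
  | right _ => 0
  end.

Definition Rinf (E : R -> Prop) : R := - Rsup (fun y => E (- y)).

Fixpoint cnt (K : nat -> Prop) (m : nat) : nat :=
  match m with
  | O => O
  | S m' => (cnt K m' + (if excluded_middle_informative (K (S m')) then 1 else 0))%nat
  end.

Definition dens_ratio (K : nat -> Prop) (n : nat) : R :=
  INR (cnt K (S n)) / INR (S n).

(* liminf_{n->oo} of the ratios = sup_N inf_{n >= N} *)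
Definition lower_density (K : nat -> Prop) : R :=
  Rsup (fun y => exists N : nat,
          y = Rinf (fun z => exists n : nat, (N <= n)%nat /\ z = dens_ratio K n)).

Definition upper_density (K : nat -> Prop) : R :=
  Rinf (fun y => exists N : nat,
          y = Rsup (fun z => exists n : nat, (N <= n)%nat /\ z = dens_ratio K n)).

Definition index_conv (x : nat -> R) (L : R) : R :=
  Rinf (fun y => exists eps : R, eps > 0 /\
          y = lower_density (fun n => (1 <= n)%nat /\ Rabs (x n - L) < eps)).

From Stdlib Require Import Reals Lra Lia Arith Classical ClassicalEpsilon Wf_nat.
Open Scope R_scope.

(* If i(x_n; L) >= sigma, each set A_j = {n | |x_n - L| < 1/(j+1)} has lower
   density >= sigma, and the A_j decrease.  Choose thresholds T_0 < T_1 < ...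
   such that past T_j the counting ratios of A_j exceed sigma - 1/(j+1), and
   let B consist of the m >= T_0 lying in A_j for every T_j <= m.  Up to T_(j+1) the
   set B contains A_j beyond T_0, so B still has lower density >= sigma; and B is
   eventually inside every A_j, so enumerating B increasingly gives a
   subsequence converging to L.  Conversely, the indices of such a subsequence
   lie, except for finitely many, in every set {n | |x_n - L| < eps}. *)

Lemma Rsup_is_lub (E : R -> Prop) : (exists x, E x) -> bound E -> is_lub E (Rsup E).
Proof.
  intros Hne Hb. unfold Rsup.
  destruct (excluded_middle_informative _) as [H | H].
  - destruct (constructive_indefinite_description _ H) as [l Hl]; exact Hl.
  - exfalso; apply H. destruct (completeness E Hb Hne) as [l Hl]. exists l; exact Hl.
Qed.

Lemma Rinf_is_glb (E : R -> Prop) (b : R) : (exists x, E x) -> (forall x, E x -> b <= x) ->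
  (forall x, E x -> Rinf E <= x) /\ b <= Rinf E.
Proof.
  intros [x0 Hx0] Hb. unfold Rinf.
  assert (H : is_lub (fun y => E (- y)) (Rsup (fun y => E (- y)))).
  { apply Rsup_is_lub.
    - exists (- x0). rewrite Ropp_involutive; exact Hx0.
    - exists (- b). intros y Hy. specialize (Hb _ Hy). lra. }
  destruct H as [Hub Hleast]. split.
  - intros x Hx. assert (Hx' : E (- - x)) by (rewrite Ropp_involutive; exact Hx).
    specialize (Hub _ Hx'). lra.
  - assert (Rsup (fun y => E (- y)) <= - b).
    { apply Hleast. intros y Hy. specialize (Hb _ Hy). lra. }
    lra.
Qed.

Lemma cnt_le (K : nat -> Prop) (m : nat) : (cnt K m <= m)%nat.
Proof. induction m; simpl; [lia |]. destruct (excluded_middle_informative _); lia. Qed.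

Lemma cnt_le_add (K K' : nat -> Prop) (c M : nat) :
  (forall m, (c < m <= M)%nat -> K m -> K' m) -> (cnt K M <= cnt K' M + c)%nat.
Proof.
  induction M as [| M IH]; intros Hsub; simpl; [lia |].
  destruct (le_lt_dec (S M) c) as [Hle | Hlt].
  - pose proof (cnt_le K (S M)); simpl in *; lia.
  - specialize (IH (fun m Hm => Hsub m ltac:(lia))).
    destruct (excluded_middle_informative (K (S M))) as [HK | HK];
      destruct (excluded_middle_informative (K' (S M))) as [HK' | HK']; try lia.
    exfalso. exact (HK' (Hsub (S M) ltac:(lia) HK)).
Qed.

Lemma dens_ratio_bounds (K : nat -> Prop) (n : nat) : 0 <= dens_ratio K n <= 1.
Proof.
  unfold dens_ratio.
  assert (Hc : INR (cnt K (S n)) <= INR (S n)) by apply le_INR, cnt_le.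
  pose proof (pos_INR (cnt K (S n))).
  assert (0 < INR (S n)) by (apply lt_0_INR; lia).
  unfold Rdiv. split.
  - apply Rmult_le_pos; [| left; apply Rinv_0_lt_compat]; lra.
  - rewrite <- (Rinv_r (INR (S n))) by lra.
    apply Rmult_le_compat_r; [left; apply Rinv_0_lt_compat |]; lra.
Qed.

Lemma dens_ratio_le_add (K K' : nat -> Prop) (c n : nat) :
  (cnt K (S n) <= cnt K' (S n) + c)%nat ->
  dens_ratio K n <= dens_ratio K' n + INR c / INR (S n).
Proof.
  intros H. unfold dens_ratio. apply le_INR in H. rewrite plus_INR in H.
  assert (0 < INR (S n)) by (apply lt_0_INR; lia).
  rewrite <- Rdiv_plus_distr. apply Rmult_le_compat_r; [left; apply Rinv_0_lt_compat |]; lra.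
Qed.

Lemma INR_div_succ_eventually_lt (c : nat) (eps : R) : eps > 0 ->
  exists N, forall n, (N <= n)%nat -> INR c / INR (S n) < eps.
Proof.
  intros He. destruct (INR_archimed eps (INR c) He) as [N HN].
  exists N. intros n Hn.
  assert (INR N <= INR (S n)) by (apply le_INR; lia).
  assert (0 < INR (S n)) by (apply lt_0_INR; lia).
  apply (Rmult_lt_reg_r (INR (S n))); [lra |].
  unfold Rdiv. rewrite Rmult_assoc, Rinv_l by lra. nra.
Qed.

Lemma Rinv_INR_succ_eventually_lt (eps : R) : eps > 0 -> exists J, / INR (S J) < eps.
Proof.
  intros He. destruct (archimed_cor1 eps He) as [N [HN HN0]].
  exists (pred N). now replace (S (pred N)) with N by lia.
Qed.

Lemma Rinv_INR_succ_le (i j : nat) : (i <= j)%nat -> / INR (S j) <= / INR (S i).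
Proof.
  intros H. apply Rinv_le_contravar; [apply lt_0_INR; lia | apply le_INR; lia].
Qed.

Definition tail_inf (K : nat -> Prop) (N : nat) : R :=
  Rinf (fun z => exists n, (N <= n)%nat /\ z = dens_ratio K n).

Lemma tail_inf_le (K : nat -> Prop) (N n : nat) :
  (N <= n)%nat -> tail_inf K N <= dens_ratio K n.
Proof.
  intros Hn. apply (Rinf_is_glb _ 0).
  - exists (dens_ratio K N); eauto.
  - intros z [i [_ ->]]. apply dens_ratio_bounds.
  - eauto.
Qed.

Lemma tail_inf_ge (K : nat -> Prop) (N : nat) (b : R) :
  (forall n, (N <= n)%nat -> b <= dens_ratio K n) -> b <= tail_inf K N.
Proof.
  intros H. apply (Rinf_is_glb _ b).
  - exists (dens_ratio K N); eauto.
  - intros z [n [Hn ->]]. auto.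
Qed.

Lemma lower_density_is_lub (K : nat -> Prop) :
  is_lub (fun y => exists N, y = tail_inf K N) (lower_density K).
Proof.
  apply Rsup_is_lub.
  - exists (tail_inf K 0); exists 0%nat; reflexivity.
  - exists 1. intros y [N ->].
    apply Rle_trans with (dens_ratio K N); [apply tail_inf_le; lia | apply dens_ratio_bounds].
Qed.

Lemma lower_density_nonneg (K : nat -> Prop) : 0 <= lower_density K.
Proof.
  apply Rle_trans with (tail_inf K 0); [| apply (lower_density_is_lub K); eauto].
  apply tail_inf_ge. intros n _. apply dens_ratio_bounds.
Qed.

Lemma lower_density_ge_iff (K : nat -> Prop) (s : R) : lower_density K >= s <->
  forall eps, eps > 0 -> exists N, forall n, (N <= n)%nat -> dens_ratio K n > s - eps.
Proof.
  destruct (lower_density_is_lub K) as [Hub Hleast]. split.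
  - intros Hs eps He.
    destruct (classic (exists N, tail_inf K N > lower_density K - eps)) as [[N HN] | Hno].
    + exists N. intros n Hn. pose proof (tail_inf_le K N n Hn). lra.
    + exfalso. assert (lower_density K <= lower_density K - eps); [| lra].
      apply Hleast. intros y [N ->]. apply Rnot_gt_le. intro. apply Hno; eauto.
  - intros H. apply Rnot_lt_ge. intro Hlt.
    destruct (H ((s - lower_density K) / 2)) as [N HN]; [lra |].
    assert (s - (s - lower_density K) / 2 <= tail_inf K N)
      by (apply tail_inf_ge; intros; left; apply HN; auto).
    assert (tail_inf K N <= lower_density K) by (apply Hub; eauto).
    lra.
Qed.

(* Finitely many exceptions cost a vanishing [c/(n+1)] in the counting ratios. *)
Lemma lower_density_ge_of_eventual_subset (K K' : nat -> Prop) (c : nat) (s : R) :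
  (forall m, (c < m)%nat -> K m -> K' m) ->
  lower_density K >= s -> lower_density K' >= s.
Proof.
  intros Hsub HK. apply lower_density_ge_iff. intros eps He.
  destruct (proj1 (lower_density_ge_iff K s) HK (eps / 2)) as [N1 HN1]; [lra |].
  destruct (INR_div_succ_eventually_lt c (eps / 2)) as [N2 HN2]; [lra |].
  exists (Nat.max N1 N2). intros n Hn.
  assert (Hc : (cnt K (S n) <= cnt K' (S n) + c)%nat)
    by (apply cnt_le_add; intros m Hm; apply Hsub; lia).
  apply dens_ratio_le_add in Hc.
  specialize (HN1 n ltac:(lia)). specialize (HN2 n ltac:(lia)). lra.
Qed.

Lemma lower_density_pos_unbounded (K : nat -> Prop) (s : R) :
  0 < s -> lower_density K >= s -> forall M, exists m, (M < m)%nat /\ K m.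
Proof.
  intros Hs HK M. apply NNPP. intro Hno.
  assert (Hfin : lower_density (fun _ => False) >= s).
  { apply (lower_density_ge_of_eventual_subset K _ M); [| exact HK].
    intros m Hm Km. apply Hno; eauto. }
  destruct (proj1 (lower_density_ge_iff _ s) Hfin (s / 2)) as [N HN]; [lra |].
  specialize (HN N (le_n N)).
  assert (H0 : dens_ratio (fun _ => False) N = 0).
  { unfold dens_ratio.
    assert (Hz : forall m, cnt (fun _ => False) m = 0%nat).
    { induction m as [| m IH]; simpl; [reflexivity |].
      destruct (excluded_middle_informative False) as [[] |]. lia. }
    rewrite Hz. apply Rdiv_0_l. }
  lra.
Qed.

Lemma index_conv_ge_iff (x : nat -> R) (L s : R) : index_conv x L >= s <->
  forall eps, eps > 0 -> lower_density (fun n => (1 <= n)%nat /\ Rabs (x n - L) < eps) >= s.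
Proof.
  unfold index_conv.
  set (E := fun y => exists eps, eps > 0 /\
              y = lower_density (fun n => (1 <= n)%nat /\ Rabs (x n - L) < eps)).
  assert (HE : exists y, E y) by (exists (lower_density (fun n => (1 <= n)%nat /\ Rabs (x n - L) < 1)),
    1; split; [lra | reflexivity]).
  split.
  - intros Hs eps He.
    destruct (Rinf_is_glb E 0 HE) as [Hlb _].
    + intros y [e [_ ->]]. apply lower_density_nonneg.
    + specialize (Hlb _ (ex_intro _ eps (conj He eq_refl))). lra.
  - intros H. apply Rle_ge, (Rinf_is_glb E s HE).
    intros y [e [He ->]]. apply Rge_le, H, He.
Qed.

Section StrictlyIncreasing.

Variable f : nat -> nat.
Hypothesis f_lt_succ : forall n, (f n < f (S n))%nat.

Lemma strict_mono_of_lt_succ (n m : nat) : (n < m)%nat -> (f n < f m)%nat.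
Proof.
  induction m as [| m IH]; intros H; [lia |].
  pose proof (f_lt_succ m).
  destruct (Nat.eq_dec n m) as [-> | Hne]; [lia |]. specialize (IH ltac:(lia)). lia.
Qed.

Lemma le_mono_of_lt_succ (n m : nat) : (n <= m)%nat -> (f n <= f m)%nat.
Proof.
  intros H. destruct (Nat.eq_dec n m) as [-> | Hne]; [lia |].
  pose proof (strict_mono_of_lt_succ n m ltac:(lia)). lia.
Qed.

Lemma lt_of_strict_mono_lt (n m : nat) : (f n < f m)%nat -> (n < m)%nat.
Proof.
  intros H. destruct (le_lt_dec m n) as [Hle | Hlt]; [| exact Hlt].
  destruct (Nat.eq_dec m n) as [-> | Hne]; [lia |].
  pose proof (strict_mono_of_lt_succ m n ltac:(lia)). lia.
Qed.

Lemma le_of_lt_succ (n : nat) : (n <= f n)%nat.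
Proof. induction n as [| n IH]; [lia |]. pose proof (f_lt_succ n). lia. Qed.

Lemma bracket_of_lt_succ (m : nat) : (f 0 <= m)%nat -> exists j, (f j <= m < f (S j))%nat.
Proof.
  induction m as [| m IH]; intros H0.
  - exists 0%nat. pose proof (f_lt_succ 0). lia.
  - destruct (le_lt_dec (f 0) m) as [Hle | Hlt].
    + destruct (IH Hle) as [j Hj].
      destruct (le_lt_dec (f (S j)) (S m)) as [H2 | H2].
      * exists (S j). pose proof (f_lt_succ (S j)). lia.
      * exists j. lia.
    + exists 0%nat. pose proof (f_lt_succ 0). lia.
Qed.

End StrictlyIncreasing.

Lemma enumerate_unbounded_set (B : nat -> Prop) :
  (forall M, exists m, (M < m)%nat /\ B m) ->
  exists k : nat -> nat, (forall n, B (k n)) /\ (forall n, (k n < k (S n))%nat) /\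
    (forall m, B m -> exists n, k n = m).
Proof.
  intros Hunb.
  assert (Hnext : forall M, exists m, ((M <= m)%nat /\ B m) /\
                    forall m', (M <= m')%nat /\ B m' -> (m <= m')%nat).
  { intros M.
    destruct (dec_inh_nat_subset_has_unique_least_element (fun m => (M <= m)%nat /\ B m))
      as [m [Hm _]].
    - intros n; apply classic.
    - destruct (Hunb M) as [m [Hm HBm]]. exists m. split; [lia | exact HBm].
    - exists m; exact Hm. }
  destruct (choice _ Hnext) as [next Hnext'].
  set (k := fix k n := match n with O => next O | S n' => next (S (k n')) end).
  assert (Hk_succ : forall n, (k n < k (S n))%nat)
    by (intros n; apply (proj1 (Hnext' (S (k n))))).
  exists k. split; [| split; [exact Hk_succ |]].
  - intros [| n]; apply Hnext'.
  - intros m Hm.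
    (* [k (S n)] is the least element of [B] above [k n], so no element is skipped. *)
    assert (Hreach : forall n, (m <= k n)%nat -> exists i, k i = m).
    { induction n as [| n IH]; intros H.
      - exists 0%nat. pose proof (proj2 (Hnext' 0%nat) m (conj (Nat.le_0_l m) Hm)).
        simpl in *. lia.
      - destruct (le_lt_dec m (k n)) as [Hle | Hlt]; [exact (IH Hle) |].
        exists (S n). pose proof (proj2 (Hnext' (S (k n))) m (conj Hlt Hm)). simpl in *. lia. }
    apply (Hreach m), (le_of_lt_succ k Hk_succ).
Qed.

Fixpoint thresholds (N : nat -> nat) (j : nat) : nat :=
  match j with
  | O => S (N 0%nat)
  | S j' => S (Nat.max (thresholds N j') (N j))
  end.

Lemma thresholds_lt_succ (N : nat -> nat) (j : nat) : (thresholds N j < thresholds N (S j))%nat.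
Proof. simpl. lia. Qed.

Lemma lt_thresholds (N : nat -> nat) (j : nat) : (N j < thresholds N j)%nat.
Proof. destruct j; simpl; lia. Qed.

Section Diagonal.

Variable A : nat -> nat -> Prop.
Variable s : R.
Variable N : nat -> nat.
Hypothesis A_antitone : forall i j m, (i <= j)%nat -> A j m -> A i m.
Hypothesis dens_ratio_A : forall j n, (N j <= n)%nat -> dens_ratio (A j) n > s - / INR (S j).

Definition diagonal_set (m : nat) : Prop :=
  (thresholds N 0 <= m)%nat /\ forall j, (thresholds N j <= m)%nat -> A j m.

Lemma lower_density_diagonal_set : lower_density diagonal_set >= s.
Proof.
  unfold diagonal_set. set (T := thresholds N).
  pose proof (lt_of_strict_mono_lt T (thresholds_lt_succ N)) as T_reflect.
  apply lower_density_ge_iff. intros eps He.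
  destruct (Rinv_INR_succ_eventually_lt (eps / 2)) as [J HJ]; [lra |].
  destruct (INR_div_succ_eventually_lt (T 0%nat) (eps / 2)) as [N0 HN0]; [lra |].
  exists (Nat.max (T J) N0). intros n Hn.
  pose proof (le_mono_of_lt_succ T (thresholds_lt_succ N) 0 J (Nat.le_0_l J)).
  destruct (bracket_of_lt_succ T (thresholds_lt_succ N) (S n)) as [j Hj]; [lia |].
  (* the bracket [T j <= n + 1 < T (j + 1)] singles out the set [A j] to compare with *)
  assert (HJj : (J <= j)%nat) by (enough (J < S j)%nat by lia; apply T_reflect; lia).
  assert (Hcnt : (cnt (A j) (S n) <= cnt (fun m => (T 0%nat <= m)%nat /\
                    forall i, (T i <= m)%nat -> A i m) (S n) + T 0%nat)%nat).
  { apply cnt_le_add. intros m Hm Ajm. split; [lia |].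
    intros i Hi. apply (A_antitone i j); [| exact Ajm].
    enough (i < S j)%nat by lia. apply T_reflect. lia. }
  apply dens_ratio_le_add in Hcnt.
  pose proof (lt_thresholds N j) as HNj. fold T in HNj.
  specialize (dens_ratio_A j n ltac:(lia)).
  specialize (HN0 n ltac:(lia)).
  pose proof (Rinv_INR_succ_le J j HJj).
  lra.
Qed.

End Diagonal.

Lemma exists_diagonal_set (A : nat -> nat -> Prop) (s : R) :
  (forall i j m, (i <= j)%nat -> A j m -> A i m) ->
  (forall j, lower_density (A j) >= s) ->
  exists B : nat -> Prop, lower_density B >= s /\ (forall m, B m -> A 0%nat m) /\
    forall J, exists M, forall m, (M <= m)%nat -> B m -> A J m.
Proof.
  intros A_antitone dens_A.
  assert (HN : forall j, exists N, forall n, (N <= n)%nat -> dens_ratio (A j) n > s - / INR (S j)).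
  { intros j. apply (proj1 (lower_density_ge_iff (A j) s) (dens_A j)).
    apply Rinv_0_lt_compat, lt_0_INR. lia. }
  destruct (choice _ HN) as [N HN'].
  exists (diagonal_set A N). split; [| split].
  - exact (lower_density_diagonal_set A s N A_antitone HN').
  - intros m [H0 HB]. exact (HB 0%nat H0).
  - intros J. exists (thresholds N J). intros m Hm [_ HB]. exact (HB J Hm).
Qed.

Lemma subsequence_of_index_conv_ge (x : nat -> R) (L sigma : R) :
  0 < sigma -> index_conv x L >= sigma ->
  exists k : nat -> nat,
    (forall n, (1 <= k n)%nat) /\
    (forall n m, (n < m)%nat -> (k n < k m)%nat) /\
    Un_cv (fun n => x (k n)) L /\
    lower_density (fun m => exists n, k n = m) >= sigma.
Proof.
  intros Hs Hi. rewrite index_conv_ge_iff in Hi.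
  set (A := fun j n => (1 <= n)%nat /\ Rabs (x n - L) < / INR (S j)).
  destruct (exists_diagonal_set A sigma) as [B [HB [HBA0 HBA]]].
  - intros i j m Hij [H1 H2]. split; [exact H1 |].
    pose proof (Rinv_INR_succ_le i j Hij). lra.
  - intros j. apply Hi, Rinv_0_lt_compat, lt_0_INR. lia.
  - destruct (enumerate_unbounded_set B (lower_density_pos_unbounded B sigma Hs HB))
      as [k [HkB [Hk_succ Hk_onto]]].
    exists k. split; [| split; [| split]].
    + intros n. exact (proj1 (HBA0 _ (HkB n))).
    + exact (strict_mono_of_lt_succ k Hk_succ).
    + intros eps He. destruct (Rinv_INR_succ_eventually_lt eps He) as [J HJ].
      destruct (HBA J) as [M HM]. exists M. intros n Hn. unfold Rdist.
      pose proof (le_of_lt_succ k Hk_succ n).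
      destruct (HM (k n) ltac:(lia) (HkB n)) as [_ Hx]. lra.
    + apply (lower_density_ge_of_eventual_subset B _ 0); [| exact HB].
      intros m _ Hm. exact (Hk_onto m Hm).
Qed.

Lemma index_conv_ge_of_subsequence (x : nat -> R) (L sigma : R) (k : nat -> nat) :
  (forall n, (1 <= k n)%nat) ->
  (forall n m, (n < m)%nat -> (k n < k m)%nat) ->
  Un_cv (fun n => x (k n)) L ->
  lower_density (fun m => exists n, k n = m) >= sigma ->
  index_conv x L >= sigma.
Proof.
  intros Hk1 Hk_mono Hcv Hd. apply index_conv_ge_iff. intros eps He.
  destruct (Hcv eps He) as [M HM].
  apply (lower_density_ge_of_eventual_subset (fun m => exists n, k n = m) _ (k M));
    [| exact Hd].
  intros m Hm [i <-]. split; [apply Hk1 |].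
  apply HM. destruct (le_lt_dec M i) as [Hle | Hlt]; [exact Hle |].
  pose proof (Hk_mono i M Hlt). lia.
Qed.

Theorem mainTheorem1 (x : nat -> R) (L sigma : R) :
  0 < sigma <= 1 ->
  (index_conv x L >= sigma <->
   exists k : nat -> nat,
     (forall n, (1 <= k n)%nat) /\
     (forall n m, (n < m)%nat -> (k n < k m)%nat) /\
     Un_cv (fun n => x (k n)) L /\
     lower_density (fun m => exists n, k n = m) >= sigma).
Proof.
  intros [Hs _]. split.
  - exact (subsequence_of_index_conv_ge x L sigma Hs).
  - intros [k [Hk1 [Hk_mono [Hcv Hd]]]].
    exact (index_conv_ge_of_subsequence x L sigma k Hk1 Hk_mono Hcv Hd).
Qed.
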